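(* Let $G=(V,\mathcal E)$ be an undirected loopless graph and $(V_j)_{j\in J}$ a partition of $V$ into non-empty sets. Then $(V_j)_{j\in J}$ is a monomorphic decomposition of $G$ if and only if each induced subgraph $G_{\restriction V_j}$ is a clique or an independent set and $G$ is the lexicographic sum of the graphs $G_{\restriction V_j}$ indexed by some graph $H$ on $J$. In particular, $G$ has a monomorphic decomposition into finitely many classes if and only if $G$ is a lexicographic sum of cliques or independent sets indexed by a finite graph.
   Context: A monomorphic decomposition of a graph $G$ with vertex set $V$ is a partition $(V_j)_{j\in J}$ of $V$ into non-empty sets such that for all finite $F,F'\subseteq V$ with $|F\cap V_j|=|F'\cap V_j|$ for every $j\in J$, the induced subgraphs $G_{\restriction F}$ and $G_{\restriction F'}$ are isomorphic. If $H$ is a graph on a vertex set $J$ and $(L_j)_{j\in J}$ are graphs, the lexicographic sum of the $L_j$ indexed by $H$ is the graph on the disjoint union of the vertex sets of the $L_j$ in which two vertices of the same $L_j$ are adjacent iff they are adjacent in $L_j$, and $x\in L_i$, $y\in L_j$ with $i\neq j$ are adjacent iff $\{i,j\}$ is an edge of $H$. *)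

From Stdlib Require Import List.
Import ListNotations.
Set Implicit Arguments.

Definition is_graph (V : Type) (E : V -> V -> Prop) : Prop :=
  (forall x y, E x y -> E y x) /\ (forall x, ~ E x x).

Definition finite_subset (V : Type) (P : V -> Prop) : Prop :=
  exists l : list V, forall x, P x -> In x l.

Definition has_card (V : Type) (P : V -> Prop) (n : nat) : Prop :=
  exists l : list V, NoDup l /\ length l = n /\ (forall x, P x <-> In x l).

Definition induced_isomorphic (V : Type) (E : V -> V -> Prop)
  (F F' : V -> Prop) : Prop :=
  exists f : V -> V,
    (forall x, F x -> F' (f x)) /\
    (forall x y, F x -> F y -> f x = f y -> x = y) /\
    (forall y, F' y -> exists x, F x /\ f x = y) /\
    (forall x y, F x -> F y -> (E x y <-> E (f x) (f y))).

(* A partition (V_j)_{j in J} of V into non-empty sets is encoded by the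
   class map cls : V -> J (V_j = cls^{-1}(j)); non-emptiness = surjectivity. *)
Definition nonempty_classes (V J : Type) (cls : V -> J) : Prop :=
  forall j, exists v, cls v = j.

Definition monomorphic_decomposition (V J : Type) (E : V -> V -> Prop)
  (cls : V -> J) : Prop :=
  forall F F' : V -> Prop,
    finite_subset F -> finite_subset F' ->
    (forall (j : J) (n : nat),
        has_card (fun x => F x /\ cls x = j) n <->
        has_card (fun x => F' x /\ cls x = j) n) ->
    induced_isomorphic E F F'.

Definition clique_or_independent (V J : Type) (E : V -> V -> Prop)
  (cls : V -> J) (j : J) : Prop :=
  (forall x y, cls x = j -> cls y = j -> x <> y -> E x y) \/
  (forall x y, cls x = j -> cls y = j -> ~ E x y).

(* E is the lexicographic sum of the induced subgraphs E|V_j indexed by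
   the graph H on J (edges inside a class are those of E by definition). *)
Definition lexicographic_sum_of (V J : Type) (E : V -> V -> Prop)
  (cls : V -> J) (H : J -> J -> Prop) : Prop :=
  is_graph H /\
  (forall x y, cls x <> cls y -> (E x y <-> H (cls x) (cls y))).

Definition finite_type (J : Type) : Prop :=
  exists l : list J, forall j, In j l.

From Stdlib Require Import List ClassicalEpsilon Classical Lia.
Import ListNotations.
Set Implicit Arguments.

(* Both sides are equivalent to: for x <> y and u <> v with x, u in one class
   and y, v in one class, xy is an edge iff uv is.  A monomorphic decomposition
   has this property because {x, y} and {u, v} have the same class counts.
   Conversely, two finite sets with the same class counts admit a
   class-preserving bijection (match their elements class by class), and under
   the property every such bijection is an isomorphism of induced subgraphs.
   The property itself says exactly that each class is a clique or an
   independent set and that edges between distinct classes depend only on the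
   classes, i.e. G is a lexicographic sum. *)

Section Cardinality.

Variable V : Type.
Implicit Types P Q : V -> Prop.

Lemma has_card_ext {P Q n} :
  (forall x, P x <-> Q x) -> (has_card P n <-> has_card Q n).
Proof.
  intros HPQ; split; intros [l [Hnodup [Hlen Hmem]]]; exists l;
    repeat split; auto; intros Hx; firstorder.
Qed.

Lemma has_card_unique P n m : has_card P n -> has_card P m -> n = m.
Proof.
  intros [l [Hl [<- Ml]]] [l' [Hl' [<- Ml']]].
  enough (length l <= length l' /\ length l' <= length l) by lia.
  split; apply NoDup_incl_length; auto; intros x Hx; firstorder.
Qed.

Lemma has_card_nonempty {P n a} : has_card P n -> P a -> exists m, n = S m.
Proof.
  intros [[|b l] [_ [<- Hmem]]] Pa.
  - destruct (proj1 (Hmem a) Pa).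
  - exists (length l). reflexivity.
Qed.

Lemma has_card_S_inhabited P n : has_card P (S n) -> exists a, P a.
Proof.
  intros [[|a l] [_ [Hlen Hmem]]]; [discriminate|exists a; apply Hmem; left; auto].
Qed.

Lemma has_card_remove {P a n} :
  P a -> (has_card (fun x => P x /\ x <> a) n <-> has_card P (S n)).
Proof.
  intros Pa; split.
  - intros [l [Hnodup [Hlen Hmem]]]. exists (a :: l). repeat split.
    + constructor; auto. intros Ha. apply Hmem in Ha. tauto.
    + simpl; auto.
    + intros Px. destruct (classic (x = a)) as [->|Hxa]; [left|right]; firstorder.
    + intros [<-|Hx]; [auto|apply Hmem in Hx; tauto].
  - intros [l [Hnodup [Hlen Hmem]]].
    destruct (in_split a l) as [l1 [l2 ->]]; [apply Hmem, Pa|].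
    exists (l1 ++ l2). split; [|split; [|intros x; split]].
    + eapply NoDup_remove_1; eauto.
    + rewrite length_app in *. simpl in Hlen. lia.
    + intros [Px Hxa]. apply Hmem, in_app_or in Px. apply in_or_app.
      destruct Px as [?|[?|?]]; auto. congruence.
    + intros Hx. split.
      * apply Hmem. apply in_app_or in Hx. apply in_or_app.
        destruct Hx; simpl; auto.
      * intros ->. eapply NoDup_remove_2; eauto.
Qed.

Lemma finite_subset_weaken {P Q} :
  finite_subset P -> (forall x, Q x -> P x) -> finite_subset Q.
Proof. intros [l Hl] HQP. exists l. auto. Qed.

Lemma has_card_finite P n : has_card P n -> finite_subset P.
Proof. intros [l [_ [_ Hmem]]]. exists l. apply Hmem. Qed.

Lemma finite_subset_has_card P : finite_subset P -> exists n, has_card P n.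
Proof.
  intros [l Hl]. revert P Hl.
  induction l as [|a l IH]; intros P Hl.
  - exists 0, []. repeat split; [constructor|intros Px; exact (Hl x Px)|intros []].
  - destruct (IH (fun x => P x /\ x <> a)) as [n Hn].
    { intros x [Px Hxa]. destruct (Hl x Px); [congruence|auto]. }
    destruct (classic (P a)) as [Pa|nPa].
    + exists (S n). exact (proj1 (has_card_remove Pa) Hn).
    + exists n. refine (proj1 (has_card_ext _) Hn).
      intros x. split; [tauto|]. intros Px. split; congruence.
Qed.

End Cardinality.

Lemma has_card_image {V W : Type} {P : V -> Prop} {Q : W -> Prop} (g : V -> W) {n} :
  has_card P n -> (forall x, P x -> Q (g x)) ->
  (forall x y, P x -> P y -> g x = g y -> x = y) ->
  (forall y, Q y -> exists x, P x /\ g x = y) -> has_card Q n.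
Proof.
  intros [l [Hnodup [Hlen Hmem]]] HPQ Hinj Hsurj. exists (map g l). repeat split.
  - apply NoDup_map_NoDup_ForallPairs; auto.
    intros x y Hx Hy. apply Hinj; apply Hmem; auto.
  - rewrite length_map; auto.
  - intros Qx. destruct (Hsurj x Qx) as [z [Pz <-]]. apply in_map, Hmem, Pz.
  - intros Hx. apply in_map_iff in Hx as [z [<- Hz]]. apply HPQ, Hmem, Hz.
Qed.

Section ClassBijections.

Variables V J : Type.
Variable cls : V -> J.

Definition same_class_counts (F F' : V -> Prop) : Prop :=
  forall j n, has_card (fun x => F x /\ cls x = j) n <->
              has_card (fun x => F' x /\ cls x = j) n.

Definition class_bijection (F F' : V -> Prop) (f : V -> V) : Prop :=
  (forall x, F x -> F' (f x) /\ cls (f x) = cls x) /\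
  (forall x y, F x -> F y -> f x = f y -> x = y) /\
  (forall y, F' y -> exists x, F x /\ f x = y).

Lemma class_bijection_same_counts (F F' : V -> Prop) f :
  finite_subset F -> class_bijection F F' f -> same_class_counts F F'.
Proof.
  intros HF [Hmap [Hinj Hsurj]].
  assert (Hforward : forall j n, has_card (fun x => F x /\ cls x = j) n ->
                                 has_card (fun x => F' x /\ cls x = j) n).
  { intros j n Hn. apply (has_card_image f Hn).
    - intros x [Fx <-]. apply Hmap, Fx.
    - intros x y [Fx _] [Fy _]. apply Hinj; auto.
    - intros y [F'y <-]. destruct (Hsurj y F'y) as [x [Fx <-]].
      exists x. repeat split; auto. symmetry. apply Hmap, Fx. }
  intros j n. split; [apply Hforward|]. intros Hn'.
  destruct (finite_subset_has_card (P := fun x => F x /\ cls x = j)) as [m Hm].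
  { apply (finite_subset_weaken HF). tauto. }
  rewrite (has_card_unique Hn' (Hforward j m Hm)). exact Hm.
Qed.

Lemma same_class_counts_remove (F F' : V -> Prop) a b :
  F a -> F' b -> cls b = cls a -> same_class_counts F F' ->
  same_class_counts (fun x => F x /\ x <> a) (fun y => F' y /\ y <> b).
Proof.
  intros Fa F'b Cb Hcounts j n.
  destruct (classic (cls a = j)) as [<-|Hj].
  - assert (Hsame : forall (G : V -> Prop) c x,
              (G x /\ x <> c) /\ cls x = cls a <-> (G x /\ cls x = cls a) /\ x <> c)
      by (intros; tauto).
    rewrite (has_card_ext (Hsame F a)), (has_card_ext (Hsame F' b)).
    rewrite !has_card_remove by auto.
    apply Hcounts.
  - assert (Hother : forall (G : V -> Prop) c, cls c = cls a ->
              forall x, (G x /\ x <> c) /\ cls x = j <-> G x /\ cls x = j).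
    { intros G c Cc x. split; [tauto|]. intros [Gx Cx]. repeat split; auto.
      intros ->. congruence. }
    rewrite (has_card_ext (Hother F a eq_refl)), (has_card_ext (Hother F' b Cb)).
    apply Hcounts.
Qed.

Lemma class_bijection_extend (F F' : V -> Prop) a b f :
  F a -> F' b -> cls b = cls a ->
  class_bijection (fun x => F x /\ x <> a) (fun y => F' y /\ y <> b) f ->
  class_bijection F F'
    (fun x => if excluded_middle_informative (x = a) then b else f x).
Proof.
  intros Fa F'b Cb [Hmap [Hinj Hsurj]]. split; [|split].
  - intros x Fx. destruct (excluded_middle_informative (x = a)) as [->|Hxa].
    + auto.
    + destruct (Hmap x (conj Fx Hxa)) as [[F'fx _] Cfx]. auto.
  - intros x y Fx Fy.
    destruct (excluded_middle_informative (x = a)) as [Hxa|Hxa],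
      (excluded_middle_informative (y = a)) as [Hya|Hya]; try congruence.
    + intros Hb. destruct (Hmap y (conj Fy Hya)) as [[_ Hfy] _]. congruence.
    + intros Hb. destruct (Hmap x (conj Fx Hxa)) as [[_ Hfx] _]. congruence.
    + apply Hinj; auto.
  - intros y F'y. destruct (classic (y = b)) as [->|Hyb].
    + exists a. split; auto. destruct (excluded_middle_informative (a = a)); congruence.
    + destruct (Hsurj y (conj F'y Hyb)) as [x [[Fx Hxa] <-]]. exists x. split; auto.
      destruct (excluded_middle_informative (x = a)); congruence.
Qed.

Lemma same_class_counts_class_bijection n : forall F F' : V -> Prop,
  has_card F n -> finite_subset F' -> same_class_counts F F' ->
  exists f, class_bijection F F' f.
Proof.
  induction n as [|n IH]; intros F F' HF HF' Hcounts.
  - assert (HF0 : forall x, ~ F x).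
    { intros x Fx. destruct (has_card_nonempty HF Fx); discriminate. }
    assert (HF'0 : forall y, ~ F' y).
    { intros y F'y.
      destruct (finite_subset_has_card (P := fun x => F' x /\ cls x = cls y)) as [m Hm].
      { apply (finite_subset_weaken HF'). tauto. }
      destruct (has_card_nonempty Hm (conj F'y eq_refl)) as [m' ->].
      apply Hcounts, has_card_S_inhabited in Hm as [x [Fx _]].
      exact (HF0 x Fx). }
    exists (fun x => x). split; [|split].
    + intros x Fx. destruct (HF0 x Fx).
    + intros x y Fx. destruct (HF0 x Fx).
    + intros y F'y. destruct (HF'0 y F'y).
  - destruct (has_card_S_inhabited HF) as [a Fa].
    destruct (finite_subset_has_card (P := fun x => F x /\ cls x = cls a)) as [m Hm].
    { apply (finite_subset_weaken (has_card_finite HF)). tauto. }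
    destruct (has_card_nonempty Hm (conj Fa eq_refl)) as [m' ->].
    apply Hcounts, has_card_S_inhabited in Hm as [b [F'b Cb]].
    destruct (IH (fun x => F x /\ x <> a) (fun y => F' y /\ y <> b)) as [f Hf].
    + exact (proj2 (has_card_remove Fa) HF).
    + apply (finite_subset_weaken HF'). tauto.
    + apply same_class_counts_remove; auto.
    + eexists. apply class_bijection_extend; eauto.
Qed.

Lemma pair_class_bijection x y u v :
  x <> y -> u <> v -> cls x = cls u -> cls y = cls v ->
  class_bijection (fun z => z = x \/ z = y) (fun z => z = u \/ z = v)
    (fun z => if excluded_middle_informative (z = x) then u else v).
Proof.
  intros Hxy Huv Cu Cv. split; [|split].
  - intros z [-> | ->]; destruct (excluded_middle_informative _); auto; congruence.
  - intros z w [-> | ->] [-> | ->];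
      repeat destruct (excluded_middle_informative _); congruence.
  - intros w [-> | ->]; [exists x|exists y];
      destruct (excluded_middle_informative _); split; auto; congruence.
Qed.

End ClassBijections.

Definition edges_determined_by_classes (V J : Type) (E : V -> V -> Prop)
  (cls : V -> J) : Prop :=
  forall x y u v, x <> y -> u <> v -> cls x = cls u -> cls y = cls v ->
    (E x y <-> E u v).

Definition quotient_graph (V J : Type) (E : V -> V -> Prop) (cls : V -> J)
  (i k : J) : Prop :=
  i <> k /\ exists x y, cls x = i /\ cls y = k /\ E x y.

Section Characterisation.

Variables V J : Type.
Variable E : V -> V -> Prop.
Variable cls : V -> J.

Lemma monomorphic_edges_determined :
  is_graph E -> monomorphic_decomposition E cls -> edges_determined_by_classes E cls.
Proof.
  intros [Esym _] Hmono x y u v Hxy Huv Cu Cv.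
  assert (Hpair_finite : forall a b : V, finite_subset (fun z => z = a \/ z = b)).
  { intros a b. exists [a; b]. intros z [-> | ->]; simpl; auto. }
  destruct (Hmono (fun z => z = x \/ z = y) (fun z => z = u \/ z = v))
    as [f [Hmap [Hinj [_ Hedge]]]]; auto.
  { eapply class_bijection_same_counts; [auto|].
    apply pair_class_bijection; auto. }
  rewrite (Hedge x y) by auto.
  assert (f x <> f y) by (intros Hf; apply Hxy, Hinj; auto).
  destruct (Hmap x (or_introl eq_refl)) as [Hfx|Hfx],
    (Hmap y (or_intror eq_refl)) as [Hfy|Hfy]; rewrite Hfx, Hfy in *;
    try congruence; try reflexivity.
  split; apply Esym.
Qed.

Lemma edges_determined_monomorphic :
  is_graph E -> edges_determined_by_classes E cls -> monomorphic_decomposition E cls.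
Proof.
  intros [_ Eirr] Hdet F F' HF HF' Hcounts.
  destruct (finite_subset_has_card HF) as [n Hn].
  destruct (same_class_counts_class_bijection Hn HF' Hcounts)
    as [f [Hmap [Hinj Hsurj]]].
  exists f. split; [|split; [exact Hinj|split; [exact Hsurj|]]].
  - intros x Fx. apply Hmap, Fx.
  - intros x y Fx Fy. destruct (Hmap x Fx) as [_ Cx], (Hmap y Fy) as [_ Cy].
    destruct (classic (x = y)) as [<-|Hxy].
    + split; intros Hloop; contradict Hloop; apply Eirr.
    + apply Hdet; auto; congruence.
Qed.

Lemma edges_determined_clique_or_independent j :
  is_graph E -> edges_determined_by_classes E cls -> clique_or_independent E cls j.
Proof.
  intros [_ Eirr] Hdet.
  destruct (classic (exists x y, cls x = j /\ cls y = j /\ x <> y /\ E x y))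
    as [[x [y [Cx [Cy [Hxy Exy]]]]]|Hnone].
  - left. intros u v Cu Cv Huv. apply (Hdet x y u v); auto; congruence.
  - right. intros u v Cu Cv Euv. apply Hnone. exists u, v. repeat split; auto.
    intros <-. exact (Eirr u Euv).
Qed.

Lemma edges_determined_lexicographic_sum :
  is_graph E -> edges_determined_by_classes E cls ->
  lexicographic_sum_of E cls (quotient_graph E cls).
Proof.
  intros [Esym Eirr] Hdet. split; [split|].
  - intros i k [Hik [x [y [Cx [Cy Exy]]]]]. split; [congruence|]. exists y, x; auto.
  - intros i [Hii _]. apply Hii; reflexivity.
  - intros x y Hxy. split.
    + intros Exy. split; auto. exists x, y; auto.
    + intros [_ [x' [y' [Cx [Cy Exy]]]]]. apply (Hdet x' y'); auto; intros ->.
      * exact (Eirr y' Exy).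
      * apply Hxy; reflexivity.
Qed.

Lemma lexicographic_sum_edges_determined H :
  (forall j, clique_or_independent E cls j) -> lexicographic_sum_of E cls H ->
  edges_determined_by_classes E cls.
Proof.
  intros Hcls [_ Hlex] x y u v Hxy Huv Cu Cv.
  destruct (classic (cls x = cls y)) as [Cxy|Cxy].
  - destruct (Hcls (cls x)) as [Hclique|Hindep].
    + split; intros _; apply Hclique; auto; congruence.
    + split; intros Hedge; contradict Hedge; apply Hindep; auto; congruence.
  - rewrite Hlex, (Hlex u v) by congruence. rewrite Cu, Cv. reflexivity.
Qed.

Lemma monomorphic_iff_lexicographic_sum :
  is_graph E ->
  (monomorphic_decomposition E cls <->
   ((forall j, clique_or_independent E cls j) /\
    exists H : J -> J -> Prop, lexicographic_sum_of E cls H)).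
Proof.
  intros HE. split.
  - intros Hmono. pose proof (monomorphic_edges_determined HE Hmono) as Hdet.
    split.
    + intros j. apply edges_determined_clique_or_independent; auto.
    + exists (quotient_graph E cls). apply edges_determined_lexicographic_sum; auto.
  - intros [Hcls [H Hlex]]. apply edges_determined_monomorphic; auto.
    apply (lexicographic_sum_edges_determined Hcls Hlex).
Qed.

End Characterisation.

Theorem mainTheorem20 :
  (forall (V J : Type) (E : V -> V -> Prop) (cls : V -> J),
     is_graph E -> nonempty_classes cls ->
     (monomorphic_decomposition E cls <->
      ((forall j, clique_or_independent E cls j) /\
       exists H : J -> J -> Prop, lexicographic_sum_of E cls H)))
  /\
  (forall (V : Type) (E : V -> V -> Prop),
     is_graph E ->
     ((exists (J : Type) (cls : V -> J),
         finite_type J /\ nonempty_classes cls /\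
         monomorphic_decomposition E cls) <->
      (exists (J : Type) (cls : V -> J) (H : J -> J -> Prop),
         finite_type J /\ nonempty_classes cls /\
         (forall j, clique_or_independent E cls j) /\
         lexicographic_sum_of E cls H))).
Proof.
  split.
  - intros V J E cls HE _. apply monomorphic_iff_lexicographic_sum, HE.
  - intros V E HE. split.
    + intros [J [cls [Hfin [Hne Hmono]]]].
      apply (monomorphic_iff_lexicographic_sum cls HE) in Hmono as [Hcls [H Hlex]].
      exists J, cls, H. auto.
    + intros [J [cls [H [Hfin [Hne [Hcls Hlex]]]]]].
      exists J, cls. repeat split; auto.
      apply (monomorphic_iff_lexicographic_sum cls HE). eauto.
Qed.
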